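(* For an ordered forest $\mathcal F$ on $[n]$, let $f_{\mathcal F}:[n]\to[n]$ send each non-root vertex to its parent and each root to itself. Then $f_{\mathcal F\mathcal G}=f_{\mathcal F}\bullet f_{\mathcal G}$, the ideals of $f_{\mathcal F}$ are exactly the vertex sets $L_V$ of the subforests $\mathrm{Lea}_V\mathcal F$ for admissible cuts $V$, and the linear map $\mathbf H_o\to\mathbf{EFSym}$, $\mathcal F\mapsto\mathbf S^{f_{\mathcal F}}$, is an injective morphism of graded Hopf algebras. Its image is the span of the $\mathbf S^\phi$ with $\phi$ acyclic (i.e. having no cycle of length $\ge2$), which is therefore a Hopf subalgebra of $\mathbf{EFSym}$ isomorphic to $\mathbf H_o$.
   Context: An ordered forest on $n$ vertices is a rooted forest with vertex set $[n]$ (labels arbitrary), given by roots and parent map. Admissible cuts are antichains $V$ for the descendant relation; $L_V$ is the set of vertices in $V$ or descending from $V$; $\mathrm{Lea}_V\mathcal F$ and $\mathrm{Roo}_V\mathcal F$ are the induced subforests on $L_V$ and on its complement, relabelled increasingly. $\mathbf H_o$ has basis the ordered forests, product $\mathcal F\mathcal G$ = disjoint union with labels of $\mathcal G$ shifted, coproduct $\Delta\mathcal F=\sum_V\mathrm{Roo}_V\mathcal F\otimes\mathrm{Lea}_V\mathcal F$. $\mathbf{EFSym}$: over $A=\{a_{ij}:i\ne j\}$ with $a_{ij}\prec a_{kl}$ iff $j=k$, $\mathbf S^f$ ($f:[n]\to[n]$) is the sum of words $w_1\cdots w_n$ with $w_{f(j)}\prec w_j$ whenever $f(j)\ne j$;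 product $\mathbf S^f\mathbf S^g=\mathbf S^{f\bullet g}$ (shifted concatenation $i\mapsto f(i)$, $n+i\mapsto g(i)+n$); coproduct $\Delta\mathbf S^f=\sum_{I\models f}\mathbf S^{\mathrm{std}(f^{[n]\setminus I})}\otimes\mathbf S^{\mathrm{std}(f^I)}$, where $I\models f$ means $f^{-1}(I)\subseteq I$, $f^I(x)=f(x)$ if $f(x)\in I$ else $x$, and $\mathrm{std}$ conjugates by the increasing bijection onto $[|I|]$. *)

From mathcomp Require Import all_boot.
Set Implicit Arguments. Unset Strict Implicit. Unset Printing Implicit Defensive.

(* A raw "parent map" on vertex set [n] = 'I_n : None for roots,
   Some y for a non-root whose parent is y. *)
Definition pforest (n : nat) := {ffun 'I_n -> option 'I_n}.

Definition upF n (p : pforest n) (o : option 'I_n) : option 'I_n := obind p o.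

(* The parent map is that of a rooted forest: from every vertex, walking up
   at most n steps reaches beyond a root (i.e. no cycles). *)
Definition is_forest n (p : pforest n) : bool :=
  [forall x : 'I_n, iter n (upF p) (Some x) == None].

Definition desc n (p : pforest n) (x y : 'I_n) : bool :=
  [exists k : 'I_n, iter k.+1 (upF p) (Some x) == Some y].

Definition admissible n (p : pforest n) (V : {set 'I_n}) : bool :=
  [forall x in V, forall y in V, ~~ desc p x y].

Definition LV n (p : pforest n) (V : {set 'I_n}) : {set 'I_n} :=
  [set x | (x \in V) || [exists v in V, desc p x v]].

(* induced subforest on S, relabelled increasingly *)
Definition restrF n (p : pforest n) (S : {set 'I_n}) : pforest #|S| :=
  [ffun k : 'I_#|S| =>
     match p (enum_val k) with
     | Some y => if y \in S then Some (enum_rank_in (enum_valP k) y) else None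
     | None => None
     end].

Definition Roo n (p : pforest n) V := restrF p (~: LV p V).
Definition Lea n (p : pforest n) V := restrF p (LV p V).

Definition forest_prod n m (p : pforest n) (q : pforest m) : pforest (n + m) :=
  [ffun i => match split i with
             | inl a => omap (@lshift n m) (p a)
             | inr b => omap (@rshift n m) (q b)
             end].

Definition HF := {n : nat & pforest n}.

(* coproduct of H_o, as the multiset of basis tensors Roo_V F (x) Lea_V F *)
Definition coprodH n (p : pforest n) : seq (HF * HF) :=
  [seq (Tagged pforest (Roo p V), Tagged pforest (Lea p V))
  | V <- enum [set V : {set 'I_n} | admissible p V]].

Definition endo (n : nat) := {ffun 'I_n -> 'I_n}.
Definition EF := {n : nat & endo n}.

Definition fbul n m (f : endo n) (g : endo m) : endo (n + m) :=
  [ffun i => match split i with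
             | inl a => lshift m (f a)
             | inr b => rshift n (g b)
             end].

Definition ideal n (f : endo n) (I : {set 'I_n}) : bool :=
  [forall x, (f x \in I) ==> (x \in I)].

(* std(f^I) : f^I restricted to I and conjugated by the increasing
   bijection I -> [|I|]  ( f^I(x) = f(x) if f(x) \in I, else x ) *)
Definition stdres n (f : endo n) (I : {set 'I_n}) : endo #|I| :=
  [ffun k : 'I_#|I| =>
     let x := enum_val k in
     enum_rank_in (enum_valP k) (if f x \in I then f x else x)].

Definition coprodE n (f : endo n) : seq (EF * EF) :=
  [seq (Tagged endo (stdres f (~: J)), Tagged endo (stdres f J))
  | J <- enum [set J : {set 'I_n} | ideal f J]].

Definition acyclic n (f : endo n) : bool :=
  ~~ [exists x : 'I_n, (f x != x) && [exists k : 'I_n, iter k.+1 f x == x]].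

Definition fF n (p : pforest n) : endo n := [ffun x => odflt x (p x)].

Definition PhiB (F : HF) : EF := Tagged endo (fF (tagged F)).
Definition PhiT (t : HF * HF) : EF * EF := (PhiB t.1, PhiB t.2).

From mathcomp Require Import all_boot zify.
Set Implicit Arguments. Unset Strict Implicit. Unset Printing Implicit Defensive.

(* Parent maps of rooted forests on [n] are exactly the self-maps whose only
   periodic points are fixed points: a forest has no cycles, and conversely a
   cycle-free map reaches a fixed point within n steps by pigeonhole.  As a
   forest has no loops, its roots are the fixed points of f_F, so F is
   recovered from f_F.  The ideals of f_F are the vertex sets closed under
   taking descendants; such a set J is L_V for V the set of maximal elements
   of J, and V |-> L_V is injective on antichains.  Restricting F to a vertex
   set S and relabelling corresponds to std(f^S), so the two coproducts agree
   term by term.  Finally f^I agrees with f off its own fixed points, which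
   keeps it cycle-free, and so does shifted concatenation. *)
Definition cycle_free (T : Type) (f : T -> T) :=
  forall x j, iter j.+1 f x = x -> f x = x.

Lemma periodic_orbit_fixed (T : Type) (f : T -> T) x j i :
  iter j.+1 f x = x -> f (iter i f x) = iter i f x -> f x = x.
Proof.
move=> per fix_i.
have le_i : i <= i.+1 * j.+1 by nia.
have cycle_x : iter (i.+1 * j.+1) f x = x by rewrite iterM iter_fix.
have cycle_i : iter (i.+1 * j.+1) f x = iter i f x.
  by rewrite -(subnK le_i) iterD iter_fix.
have x_i : iter i f x = x by rewrite -cycle_i cycle_x.
by rewrite -{1}x_i fix_i x_i.
Qed.

Lemma cycle_free_agree (T : eqType) (f h : T -> T) :
  (forall z, h z != z -> h z = f z) -> cycle_free f -> cycle_free h.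
Proof.
move=> hf cf x j per; case: (eqVneq (h x) x) => // moving.
have orbit_moving i : h (iter i h x) != iter i h x.
  exact: contra_neq (periodic_orbit_fixed per) moving.
have orbitE i : iter i h x = iter i f x.
  by elim: i => //= i IH; rewrite hf ?orbit_moving // IH.
have fx : f x = x by apply: (cf x j); rewrite -orbitE.
by move: (moving); rewrite {1}(hf x moving) fx eqxx.
Qed.

Lemma cycle_free_semiconj (T U : Type) (e : U -> T) (g : U -> U) (h : T -> T) :
  injective e -> (forall u, e (g u) = h (e u)) -> cycle_free h -> cycle_free g.
Proof.
move=> e_inj eg ch u j per; apply: e_inj.
have iterE k : e (iter k g u) = iter k h (e u) by elim: k => //= k <-.
by rewrite eg (ch _ j) // -iterE per.
Qed.

Lemma iter_eventually_periodic (T : finType) (f : T -> T) x :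
  exists i d, i + d < #|T| /\ iter d.+1 f (iter i f x) = iter i f x.
Proof.
have : ~~ injectiveb (fun k : 'I_#|T|.+1 => iter k f x).
  by apply/injectiveP => /leq_card; rewrite card_ord ltnn.
case/injectivePn => i [j ij eq_ij].
wlog lt_ij : i j ij eq_ij / i < j.
  move=> W; case: (ltngtP i j) => [|gt_ij|/val_inj i_j]; first exact: W.
    by apply: (W j i); rewrite // eq_sym.
  by rewrite i_j eqxx in ij.
exists i, (j - i).-1; split; first by have := ltn_ord j; lia.
by rewrite prednK ?subn_gt0 // -iterD subnK // ltnW.
Qed.

Lemma acyclicP n (f : endo n) : reflect (cycle_free f) (acyclic f).
Proof.
apply: (iffP idP) => [acyc x j per | cf].
- case: (eqVneq (f x) x) => // moving.
  have [i [d [bound per_i]]] := iter_eventually_periodic f x.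
  have lt_dn : d < n by rewrite card_ord in bound; lia.
  case/negP: acyc; apply/existsP; exists (iter i f x).
  rewrite (contra_neq (periodic_orbit_fixed per) moving) /=.
  by apply/existsP; exists (Ordinal lt_dn); apply/eqP.
- apply/existsP => -[x /andP [moving /existsP [k /eqP per]]].
  by rewrite (cf x k per) eqxx in moving.
Qed.

Definition pforest_of n (f : endo n) : pforest n :=
  [ffun x => if f x == x then None else Some (f x)].

Lemma fF_pforest_of n (f : endo n) : fF (pforest_of f) = f.
Proof. by apply/ffunP => x; rewrite !ffunE; case: eqP. Qed.

Lemma parent_fF n (p : pforest n) x : fF p x != x -> p x = Some (fF p x).
Proof. by rewrite ffunE; case: (p x) => [y|] //=; rewrite eqxx. Qed.

Lemma iter_upF_moving n (p : pforest n) x k :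
  (forall i, i < k -> fF p (iter i (fF p) x) != iter i (fF p) x) ->
  iter k (upF p) (Some x) = Some (iter k (fF p) x).
Proof.
elim: k => // k IH moving.
rewrite iterS IH => [|i lt_ik]; last by apply: moving; rewrite ltnS ltnW.
by rewrite /= parent_fF ?moving.
Qed.

Lemma forest_cycle_free n (p : pforest n) : is_forest p -> cycle_free (fF p).
Proof.
move=> /forallP forest x j per; case: (eqVneq (fF p x) x) => // moving.
have orbit_moving i : fF p (iter i (fF p) x) != iter i (fF p) x.
  exact: contra_neq (periodic_orbit_fixed per) moving.
by move: (forest x); rewrite iter_upF_moving // => i _; apply: orbit_moving.
Qed.

Lemma iter_upF_fixed n (f : endo n) x i :
  f (iter i f x) = iter i f x -> iter i.+1 (upF (pforest_of f)) (Some x) = None.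
Proof.
elim: i x => [|i IH] x fixed; first by rewrite /= ffunE fixed eqxx.
rewrite iterSr /= ffunE; case: eqP => _; first by rewrite iter_fix.
by apply: IH; rewrite -iterSr.
Qed.

Lemma cycle_free_forest n (f : endo n) : cycle_free f -> is_forest (pforest_of f).
Proof.
move=> cf; apply/forallP => x.
have [i [d [bound per]]] := iter_eventually_periodic f x.
have lt_in : i < n by rewrite card_ord in bound; lia.
rewrite -[X in iter X _ _](subnK lt_in) iterD iter_upF_fixed ?(cf _ d) //.
by rewrite iter_fix.
Qed.

Lemma forest_parent_neq n (p : pforest n) x : is_forest p -> p x != Some x.
Proof.
by move=> /forallP /(_ x); apply: contraL => /eqP px; rewrite iter_fix.
Qed.

Lemma fF_inj n (p q : pforest n) : is_forest p -> is_forest q ->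
  fF p = fF q -> p = q.
Proof.
move=> fp fq /ffunP fpq; apply/ffunP => x; move: (fpq x).
move: (forest_parent_neq x fp) (forest_parent_neq x fq); rewrite !ffunE.
by case: (p x) => [y|]; case: (q x) => [z|] //= np nq e; move: np nq; rewrite e ?eqxx.
Qed.

Lemma acyclic_fFP n (phi : endo n) :
  acyclic phi <-> exists p : pforest n, is_forest p /\ fF p = phi.
Proof.
split=> [/acyclicP cf | [p [fp <-]]].
- by exists (pforest_of phi); rewrite fF_pforest_of cycle_free_forest.
- exact/acyclicP/forest_cycle_free.
Qed.

Lemma split_lshift n m (a : 'I_n) : split (lshift m a) = inl a.
Proof. exact: (unsplitK (inl a)). Qed.

Lemma split_rshift n m (b : 'I_m) : split (rshift n b) = inr b.
Proof. exact: (unsplitK (inr b)). Qed.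

Lemma fF_forest_prod n m (p : pforest n) (q : pforest m) :
  fF (forest_prod p q) = fbul (fF p) (fF q).
Proof.
apply/ffunP => i; rewrite !ffunE.
by case: split_ordP => [a|b] ->; rewrite ffunE ?split_lshift ?split_rshift /=;
  [case: (p a) | case: (q b)].
Qed.

Lemma iter_fbul_lshift n m (f : endo n) (g : endo m) k a :
  iter k (fbul f g) (lshift m a) = lshift m (iter k f a).
Proof. by elim: k => //= k ->; rewrite ffunE split_lshift. Qed.

Lemma iter_fbul_rshift n m (f : endo n) (g : endo m) k b :
  iter k (fbul f g) (rshift n b) = rshift n (iter k g b).
Proof. by elim: k => //= k ->; rewrite ffunE split_rshift. Qed.

Lemma cycle_free_fbul n m (f : endo n) (g : endo m) :
  cycle_free f -> cycle_free g -> cycle_free (fbul f g).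
Proof.
move=> cf cg x j; case: (split_ordP x) => [a|b] ->.
- by rewrite iter_fbul_lshift ffunE split_lshift => /lshift_inj /cf ->.
- by rewrite iter_fbul_rshift ffunE split_rshift => /rshift_inj /cg ->.
Qed.

Definition fres n (f : endo n) (I : {set 'I_n}) (x : 'I_n) : 'I_n :=
  if f x \in I then f x else x.

Lemma enum_val_stdres n (f : endo n) (I : {set 'I_n}) k :
  enum_val (stdres f I k) = fres f I (enum_val k).
Proof.
rewrite ffunE enum_rankK_in // /fres; case: ifP => // _; exact: enum_valP.
Qed.

Lemma cycle_free_stdres n (f : endo n) (I : {set 'I_n}) :
  cycle_free f -> cycle_free (stdres f I).
Proof.
move=> cf; apply: (cycle_free_semiconj enum_val_inj (@enum_val_stdres _ f I)).
by apply: (cycle_free_agree _ cf) => z; rewrite /fres; case: ifP; rewrite ?eqxx.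
Qed.

Lemma acyclic_coprodE n (f : endo n) : acyclic f ->
  all (fun t : EF * EF => acyclic (tagged t.1) && acyclic (tagged t.2)) (coprodE f).
Proof.
move=> /acyclicP cf; apply/allP => t /mapP [J _ ->] /=.
by apply/andP; split; apply/acyclicP/cycle_free_stdres.
Qed.

Section Descendants.

Variables (n : nat) (p : pforest n).

Definition descends (x y : 'I_n) := exists j, iter j.+1 (upF p) (Some x) = Some y.

Lemma descends_trans x y z : descends x y -> descends y z -> descends x z.
Proof. by case=> j up_j [k up_k]; exists (k + j.+1); rewrite -addSn iterD up_j. Qed.

Lemma descends_parent x y : p x = Some y -> descends x y.
Proof. by exists 0. Qed.

Lemma ideal_iter_upF (J : {set 'I_n}) i x w :
  ideal (fF p) J -> iter i (upF p) (Some x) = Some w -> w \in J -> x \in J.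
Proof.
move=> /forallP idJ; elim: i x => [x [->] // | i IH x].
rewrite iterSr /=; case px: (p x) => [y|]; last by rewrite iter_fix.
move=> /IH wJ_yJ /wJ_yJ yJ; move/implyP: (idJ x); rewrite ffunE px; exact.
Qed.

Definition roots_in (J : {set 'I_n}) : {set 'I_n} :=
  [set x in J | if p x is Some y then y \notin J else true].

Hypothesis forest : is_forest p.

Lemma descP x y : reflect (descends x y) (desc p x y).
Proof.
apply: (iffP existsP) => [[k /eqP up_k] | [j up_j]]; first by exists k.
have lt_jn : j < n.
  rewrite ltnNge; apply/negP => le_nj; move: up_j.
  by rewrite -[j.+1](subnK (leqW le_nj)) iterD (eqP (forallP forest x)) iter_fix.
by exists (Ordinal lt_jn); apply/eqP.
Qed.

Lemma LVP (V : {set 'I_n}) x :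
  reflect (x \in V \/ exists2 v, v \in V & descends x v) (x \in LV p V).
Proof.
rewrite inE; apply: (iffP orP) => -[-> | ]; try by left.
- by case/existsP => v /andP [Vv /descP]; right; exists v.
- by case=> v Vv /descP xv; right; apply/existsP; exists v; rewrite Vv.
Qed.

Lemma LV_parent (V : {set 'I_n}) x y :
  p x = Some y -> y \in LV p V -> x \in LV p V.
Proof.
move=> px /LVP yV; apply/LVP; right.
case: yV => [Vy | [v Vv yv]]; first by exists y; last exact: descends_parent.
by exists v; last exact: descends_trans (descends_parent px) yv.
Qed.

Lemma LV_ideal (V : {set 'I_n}) : ideal (fF p) (LV p V).
Proof.
apply/forallP => x; apply/implyP; rewrite ffunE.
by case px: (p x) => [y|] //=; apply: LV_parent.
Qed.

Lemma roots_in_admissible (J : {set 'I_n}) :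
  ideal (fF p) J -> admissible p (roots_in J).
Proof.
move=> idJ; apply/forall_inP => x; rewrite inE => /andP [_ top_x].
apply/forall_inP => y; rewrite inE => /andP [yJ _].
apply/negP => /descP [j]; rewrite iterSr /=.
case px: (p x) top_x => [z|] zJ; last by rewrite iter_fix.
by move=> /(ideal_iter_upF idJ) /(_ yJ); rewrite (negbTE zJ).
Qed.

Lemma LV_roots_in (J : {set 'I_n}) : ideal (fF p) J -> LV p (roots_in J) = J.
Proof.
move=> idJ; apply/setP => x; apply/idP/idP.
  case/LVP => [|[v]]; first by rewrite inE => /andP [].
  by rewrite inE => /andP [vJ _] [j /(ideal_iter_upF idJ)]; apply.
have [m up_m] : exists m, iter m (upF p) (Some x) = None.
  by exists n; apply/eqP; move/forallP: forest; apply.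
elim: m x up_m => [//|m IH] x; rewrite iterSr /=.
case px: (p x) => [y|] up_m xJ; last by apply/LVP; left; rewrite inE xJ px.
case yJ: (y \in J); first exact: LV_parent px (IH y up_m yJ).
by apply/LVP; left; rewrite inE xJ px yJ.
Qed.

Lemma admissible_LV_subset (V W : {set 'I_n}) :
  admissible p V -> LV p V = LV p W -> V \subset W.
Proof.
move=> admV VW; apply/subsetP => x Vx.
have : x \in LV p W by rewrite -VW; apply/LVP; left.
case/LVP => [// | [w Ww xw]].
have : w \in LV p V by rewrite VW; apply/LVP; left.
have no_desc v : v \in V -> ~ descends x v.
  move=> Vv /descP; apply/negP.
  by move/forall_inP: admV => /(_ x Vx) /forall_inP; apply.
case/LVP => [Vw | [v Vv wv]]; first by case: (no_desc w Vw).
by case: (no_desc v Vv); apply: descends_trans wv.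
Qed.

Lemma LV_inj : {in [set V | admissible p V] &, injective (LV p)}.
Proof.
move=> V W; rewrite !inE => admV admW VW.
by apply/eqP; rewrite eqEsubset !admissible_LV_subset // VW.
Qed.

Lemma ideals_fF :
  [set J : {set 'I_n} | ideal (fF p) J]
  = [set LV p V | V in [set V : {set 'I_n} | admissible p V]].
Proof.
apply/setP => J; rewrite inE; apply/idP/imsetP => [idJ | [V _ ->]].
  by exists (roots_in J); rewrite ?inE ?roots_in_admissible ?LV_roots_in.
exact: LV_ideal.
Qed.

End Descendants.

Lemma perm_map_enum_imset (T U : finType) (f : T -> U) (A : {set T}) :
  {in A &, injective f} -> perm_eq (map f (enum A)) (enum (f @: A)).
Proof.
move=> f_inj; apply: uniq_perm; rewrite ?enum_uniq //.
  by rewrite map_inj_in_uniq ?enum_uniq // => x y; rewrite !mem_enum; apply: f_inj.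
move=> y; rewrite mem_enum; apply/mapP/imsetP => -[x xA ->]; exists x => //.
  by rewrite -mem_enum.
by rewrite mem_enum.
Qed.

Lemma fF_restrF n (p : pforest n) (S : {set 'I_n}) :
  fF (restrF p S) = stdres (fF p) S.
Proof.
apply/ffunP => k; rewrite !ffunE /= [fF p _]ffunE.
case: (p (enum_val k)) => [y|] /=; last by rewrite (enum_valP k) enum_valK_in.
by case: ifP => //= _; rewrite enum_valK_in.
Qed.

Lemma coprod_fF n (p : pforest n) : is_forest p ->
  perm_eq (map PhiT (coprodH p)) (coprodE (fF p)).
Proof.
move=> forest; pose tensor (J : {set 'I_n}) :=
  (Tagged endo (stdres (fF p) (~: J)), Tagged endo (stdres (fF p) J)).
have -> : map PhiT (coprodH p)
          = map tensor (map (LV p) (enum [set V | admissible p V])).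
  by rewrite -!map_comp; apply: eq_map => V; rewrite /PhiT /PhiB /Roo /Lea /= !fF_restrF.
rewrite /coprodE ideals_fF //; apply: perm_map.
exact/perm_map_enum_imset/LV_inj.
Qed.

Theorem mainTheorem13 :
  (forall n m (p : pforest n) (q : pforest m),
      is_forest p -> is_forest q -> fF (forest_prod p q) = fbul (fF p) (fF q)) /\
  (forall n (p : pforest n), is_forest p ->
      [set J : {set 'I_n} | ideal (fF p) J]
      = [set LV p V | V in [set V : {set 'I_n} | admissible p V]]) /\
  (forall n (p : pforest n), is_forest p ->
      perm_eq (map PhiT (coprodH p)) (coprodE (fF p))) /\
  (forall n (p q : pforest n), is_forest p -> is_forest q ->
      fF p = fF q -> p = q) /\
  (forall n (phi : endo n),
      acyclic phi <-> exists p : pforest n, is_forest p /\ fF p = phi) /\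
  (forall n m (f : endo n) (g : endo m),
      acyclic f -> acyclic g -> acyclic (fbul f g)) /\
  (forall n (f : endo n), acyclic f ->
      all (fun t : EF * EF => acyclic (tagged t.1) && acyclic (tagged t.2))
          (coprodE f)).
Proof.
split; first by move=> n m p q _ _; exact: fF_forest_prod.
split; first exact: ideals_fF.
split; first exact: coprod_fF.
split; first exact: fF_inj.
split; first exact: acyclic_fFP.
split; last exact: acyclic_coprodE.
by move=> n m f g /acyclicP cf /acyclicP cg; apply/acyclicP/cycle_free_fbul.
Qed.
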